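(* Let $r\ge 1$, $m=2^r$, let $n$ be an odd positive integer, and let $b$ be a positive integer having property $\mathcal{P}$ with respect to $n$. Then $x^{2^i n}+b^m$ is irreducible over $\mathbb{Z}$ for every integer $i$ with $0\le i\le r$.
   Context: For a positive integer $N$, a positive integer $b$ has property $\mathcal{P}$ with respect to $N$ if either $b$ is a prime number, or $b=(p_1^{b_1}p_2^{b_2}\cdots p_k^{b_k})^d$ where $k\ge 2$, $p_1,\dots,p_k$ are distinct primes, $b_1,\dots,b_k\ge 1$, $\gcd(b_1,\ldots,b_k)=1$, and $d$ is a positive integer with $\gcd(d,N)=1$. A monic polynomial in $\mathbb{Z}[x]$ of degree $\ge 1$ is irreducible over $\mathbb{Z}$ if it is not a product of two polynomials in $\mathbb{Z}[x]$ of degree at least $1$. *)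

From HB Require Import structures.
From mathcomp Require Import all_boot all_order all_algebra.
Set Implicit Arguments. Unset Strict Implicit. Unset Printing Implicit Defensive.
Import GRing.Theory Num.Theory.

(* The factorization
   b = (p_1^{b_1} ... p_k^{b_k})^d is expressed through the prime
   factorization of c := p_1^{b_1} ... p_k^{b_k}: its primes are
   [primes c] (distinct), its exponents are [logn p c] (all >= 1). *)
Definition propP (N b : nat) : Prop :=
  prime b \/
  exists c d : nat,
    [/\ 0 < d, coprime d N, b = c ^ d,
        2 <= size (primes c)
      & \big[gcdn/0]_(p <- primes c) logn p c = 1].

Definition irreducible_Z (f : {poly int}) : Prop :=
  (1 < size f)%N /\
  ~ exists g h : {poly int}, [/\ (1 < size g)%N, (1 < size h)%N & f = (g * h)%R].

From mathcomp Require Import all_boot all_order all_algebra all_field zify.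
Import GRing.Theory Num.Theory.

Set Implicit Arguments.
Unset Strict Implicit.
Unset Printing Implicit Defensive.

(* Let N := 2^i n and a := b^(2^r), and let alpha be a complex root of
   f = X^N + a, living in a number field Qs.  We show that the degree
   d := [Q(alpha) : Q] equals N, which makes f irreducible over Q and a
   fortiori over Z.  Since alpha is a root of f, d <= N; and d = N follows
   from 2^i | d and n | d, as n is odd:
   - with t := b^(2^(r-i)), the element z := alpha^n / t satisfies
     z^(2^i) = -1, so z is a primitive 2^(i+1)-th root of unity; the
     cyclotomic polynomial gives [Q(z) : Q] = totient 2^(i+1) = 2^i, and
     Q(z) is a subfield of Q(alpha);
   - the constant term of the minimal polynomial of alpha is (up to sign)
     the product of d roots of f, an algebraic integer in Q, hence an
     integer w with w^N = a^d; property P of b then forces n | d. *)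

Lemma dvdn_mul_big_gcdn (d m : nat) (s : seq nat) (F : nat -> nat) :
  (forall x, x \in s -> d %| m * F x) -> d %| m * \big[gcdn/0]_(x <- s) F x.
Proof.
rewrite (big_morph (muln m) (muln_gcdr m) (muln0 m)).
elim: s => [|x s IH] dvdF; first by rewrite big_nil dvdn0.
rewrite big_cons dvdn_gcd dvdF ?mem_head // IH // => y ys.
by apply: dvdF; rewrite inE ys orbT.
Qed.

(* If b has property P with respect to the odd number n and (b^(2^r))^e is
   a (k n)-th power, then n | e: n divides e times every prime exponent of
   b, and these exponents are d times coprime numbers with d coprime to n
   (or a single exponent 1 when b is prime). *)
Lemma propP_pow_dvd (n b r k e w : nat) :
  odd n -> propP n b -> w ^ (k * n) = (b ^ (2 ^ r)) ^ e -> n %| e.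
Proof.
move=> odd_n [prime_b|[c [d [_ co_dn -> _ gcd_exps]]]] Ew.
  have := congr1 (logn b) Ew; rewrite !lognX (logn_prime b prime_b) eqxx muln1 => El.
  have : n %| e * 2 ^ r by rewrite -El (mulnC k) -mulnA dvdn_mulr.
  by rewrite Gauss_dvdl // coprimeXr // coprimen2.
rewrite -[e]muln1 -gcd_exps; apply: dvdn_mul_big_gcdn => p _.
have := congr1 (logn p) Ew; rewrite !lognX => El.
have : n %| (e * logn p c) * (2 ^ r * d).
  rewrite (_ : _ * _ = e * (2 ^ r * (d * logn p c))); last by nia.
  by rewrite -El (mulnC k) -mulnA dvdn_mulr.
by rewrite Gauss_dvdl // coprimeMr coprimeXr ?coprimen2 // coprime_sym co_dn.
Qed.

Local Open Scope ring_scope.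

Lemma prim_root_of_pow2_root_N1 (R : idomainType) (z : R) (i : nat) :
  2%:R != 0 :> R -> z ^+ (2 ^ i) = -1 -> (2 ^ i.+1)%N.-primitive_root z.
Proof.
move=> two_neq0 z_root.
have unit_z : z ^+ (2 ^ i.+1) = 1.
  by rewrite expnS mulnC exprM z_root sqrrN expr1n.
have [k prim_k] := prim_order_exists (expn_gt0 2 i.+1) unit_z.
case/(dvdn_pfactor _ _ (isT : prime 2)) => j j_le Dk.
have k_ndvd : ~~ (k %| 2 ^ i)%N.
  rewrite (prim_order_dvd prim_k) z_root -subr_eq0 -opprD oppr_eq0.
  by rewrite (_ : 1 + 1 = 2%:R).
suff -> : (2 ^ i.+1)%N = k by [].
rewrite Dk; congr (_ ^ _)%N; apply/eqP; rewrite eqn_leq j_le ltnNge andbT.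
by move: k_ndvd; apply: contra => j_le_i; rewrite Dk dvdn_Pexp2l.
Qed.

Lemma prod_opp_exp (R : comPzRingType) (rs : seq R) (N : nat) (c : R) :
  (forall z, z \in rs -> z ^+ N = c) ->
  (\prod_(z <- rs) (- z)) ^+ N = ((-1) ^+ N * c) ^+ size rs.
Proof.
elim: rs => [|z rs IH] rs_root; first by rewrite big_nil expr1n.
rewrite big_cons exprMn IH => [|y y_rs]; last by apply: rs_root; rewrite inE y_rs orbT.
by rewrite (exprNn z) (rs_root z (mem_head _ _)) exprS.
Qed.

Section NumberField.

Variables (Qs : fieldExtType rat) (QsC : {rmorphism Qs -> algC}).

Lemma map_intr_in_alg (g : {poly int}) :
  map_poly intr g = map_poly (in_alg Qs) (map_poly intr g) :> {poly Qs}.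
Proof. by rewrite -map_poly_comp; apply: eq_map_poly => c /=; rewrite scaler_int. Qed.

Lemma map_intr_polyOver1 (g : {poly int}) :
  map_poly intr g \is a polyOver (1%VS : {vspace Qs}).
Proof. by rewrite map_intr_in_alg alg_polyOver. Qed.

Lemma size_map_intr (g : {poly int}) : size (map_poly intr g : {poly Qs}) = size g.
Proof. by rewrite map_intr_in_alg size_map_poly size_map_inj_poly //; apply: intr_inj. Qed.

Lemma map_poly_QsC_in_alg (q : {poly rat}) :
  map_poly QsC (map_poly (in_alg Qs) q) = map_poly ratr q.
Proof.
by rewrite -map_poly_comp; apply: eq_map_poly => c /=; rewrite alg_num_field fmorph_rat.
Qed.

(* The degree of z over Q can be read off in algC: the minimal polynomials
   of z over Q and of its image in algC divide each other. *)
Lemma adjoin_degree_minCpoly (z : Qs) :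
  adjoin_degree 1%VS z = (size (minCpoly (QsC z))).-1.
Proof.
have /polyOver1P [m Dm] := minPolyOver 1%AS z.
have [q [-> mon_q] root_q] := minCpolyP (QsC z).
have q_neq0 : q != 0 by apply: monic_neq0.
have root_m : root (map_poly ratr m) (QsC z).
  by rewrite -map_poly_QsC_in_alg -Dm fmorph_root root_minPoly.
have m_neq0 : m != 0.
  by rewrite -size_poly_eq0 -(size_map_poly (in_alg Qs)) -Dm size_minPoly.
have q_le_m : (size q <= size m)%N by apply: dvdp_leq; rewrite // -root_q.
have root_qz : root (map_poly (in_alg Qs) q) z.
  by rewrite -(fmorph_root QsC) map_poly_QsC_in_alg root_q dvdpp.
have q_alg_neq0 : map_poly (in_alg Qs) q != 0 by rewrite map_poly_eq0.
have := dvdp_leq q_alg_neq0 (minPoly_dvdp (K := 1%AS) (alg_polyOver _ q) root_qz).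
move: q_le_m; rewrite -(size_map_poly (in_alg Qs) m) -Dm !size_map_poly size_minPoly.
move=> q_le q_gt; suff -> : size q = (adjoin_degree 1%AS z).+1 by [].
by apply/eqP; rewrite eqn_leq q_le q_gt.
Qed.

Lemma adjoin_degree_prim_root (z : Qs) (k : nat) :
  k.-primitive_root (QsC z) -> adjoin_degree 1%VS z = totient k.
Proof.
by move=> prim_z; rewrite adjoin_degree_minCpoly (minCpoly_cyclotomic prim_z) size_cyclotomic.
Qed.

Lemma minPoly_dvd_XnaddC (x : Qs) (N a : nat) :
  x ^+ N = - a%:R -> minPoly 1%VS x %| 'X^N + (a%:R)%:P.
Proof.
move=> x_root; apply: (minPoly_dvdp (K := 1%AS)).
  by rewrite rpredD ?rpredX ?polyOverX ?polyOverC ?rpred_nat.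
by rewrite rootE hornerD hornerXn hornerC x_root addNr.
Qed.

(* If x^(2^i n) = -t^(2^i), then x^n / t is a primitive 2^(i+1)-th root of
   unity in Q(x), whose degree 2^i divides [Q(x) : Q]. *)
Lemma pow2_dvd_adjoin_degree (x : Qs) (i n t : nat) :
  (0 < t)%N -> x ^+ (2 ^ i * n) = - (t ^ 2 ^ i)%:R ->
  (2 ^ i %| adjoin_degree 1%VS x)%N.
Proof.
move=> t_gt0 x_root; pose z := ((t%:R)^-1 : rat) *: x ^+ n.
have zC_root : QsC z ^+ (2 ^ i) = -1.
  have tX_neq0 : (t ^ 2 ^ i)%:R != 0 :> algC by rewrite pnatr_eq0 -lt0n expn_gt0 t_gt0.
  rewrite rmorphZ_num exprMn -(rmorphXn QsC) -exprM (mulnC n) x_root rmorphN rmorph_nat.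
  by rewrite fmorphV rmorph_nat exprVn mulrN -natrX mulVf.
have deg_z : adjoin_degree 1%VS z = (2 ^ i)%N.
  rewrite (adjoin_degree_prim_root (prim_root_of_pow2_root_N1 _ zC_root)) ?pnatr_eq0 //.
  by rewrite totient_pfactor // mul1n.
have sub_z : (<<1%AS; z>> <= <<1%AS; x>>)%VS.
  apply/FadjoinP; split; first exact: sub1v.
  by rewrite memvZ // rpredX // memv_adjoin.
by have := field_dimS sub_z; rewrite !dim_Fadjoin dimv1 !muln1 deg_z.
Qed.

(* If x^N = -a, the constant term of the minimal polynomial of x is, up to
   sign, a product of d = [Q(x) : Q] roots of X^N + a: an integer w with
   w^N = a^d. *)
Lemma minPoly_const_pow (x : Qs) (N a : nat) :
  (0 < N)%N -> x ^+ N = - a%:R ->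
  exists w : nat, (w ^ N = a ^ adjoin_degree 1%VS x)%N.
Proof.
move=> N_gt0 x_root; have /polyOver1P [p Dp] := minPolyOver 1%AS x.
pose pC := map_poly QsC (minPoly 1%VS x).
have pC_rat : pC = map_poly ratr p by rewrite /pC Dp map_poly_QsC_in_alg.
have mon_pC : pC \is monic by rewrite map_monic monic_minPoly.
have pC_dvd : pC %| 'X^N + (a%:R)%:P.
  have -> : 'X^N + (a%:R)%:P = map_poly QsC ('X^N + (a%:R)%:P).
    by rewrite rmorphD /= map_polyXn map_polyC /= rmorph_nat.
  by rewrite dvdp_map minPoly_dvd_XnaddC.
have [rs Drs] := closed_field_poly_normal pC.
rewrite (monicP mon_pC) scale1r in Drs.
have size_rs : size rs = adjoin_degree 1%VS x.
  by have := size_prod_XsubC rs id; rewrite -Drs /pC size_map_poly size_minPoly => -[].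
have root_rs (z : algC) : z \in rs -> z ^+ N = - a%:R.
  move=> z_rs; have : root ('X^N + (a%:R)%:P) z.
    by apply: root_dvdp pC_dvd _; rewrite Drs root_prod_XsubC.
  by rewrite rootE hornerD hornerXn hornerC addr_eq0 => /eqP.
have pC0 : pC.[0] = \prod_(z <- rs) (- z).
  by rewrite Drs horner_prod; apply: eq_bigr => z _; rewrite hornerXsubC sub0r.
have pC0_int : pC.[0] \in Num.int.
  apply: Cint_rat_Aint; first by rewrite pC_rat horner_coef0 coef_map Crat_rat.
  rewrite pC0 big_seq rpred_prod // => z z_rs; rewrite rpredN.
  have fz_root : root ('X^N + (a%:R)%:P) z.
    by rewrite rootE hornerD hornerXn hornerC root_rs // addNr.
  apply: root_monic_Aint fz_root (monicXnaddC _ N_gt0) _.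
  apply/polyOverP => j; rewrite coefD coefXn coefC rpredD ?natr_int //.
  by case: ifP => _; rewrite ?natr_int ?rpred0.
have [w Dw] := natrP (natr_norm_int pC0_int).
exists w; apply/eqP; rewrite -(eqr_nat algC) !natrX -Dw -normrX pC0.
rewrite (prod_opp_exp root_rs) size_rs normrX normrM normrX normrN normr1.
by rewrite expr1n mul1r normrN normr_nat.
Qed.

Lemma irreducible_Z_of_root_degree (f : {poly int}) (x : Qs) :
  (1 < size f)%N -> root (map_poly intr f) x ->
  adjoin_degree 1%VS x = (size f).-1 -> irreducible_Z f.
Proof.
move=> size_f root_f deg_x; split=> // -[g [h [size_g size_h Df]]].
have factor_large (u : {poly int}) :
    (1 < size u)%N -> root (map_poly intr u) x -> (size f <= size u)%N.
  move=> size_u root_u; have u_neq0 : map_poly intr u != 0 :> {poly Qs}.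
    by rewrite -size_poly_eq0 size_map_intr -lt0n ltnW.
  have := dvdp_leq u_neq0 (minPoly_dvdp (K := 1%AS) (map_intr_polyOver1 u) root_u).
  by rewrite size_minPoly size_map_intr deg_x prednK // ltnW.
have g_neq0 : g != 0 by rewrite -size_poly_eq0 -lt0n ltnW.
have h_neq0 : h != 0 by rewrite -size_poly_eq0 -lt0n ltnW.
have size_gh : size f = (size g + size h).-1 by rewrite Df size_mul.
move: root_f; rewrite Df rmorphM rootM => /orP[/(factor_large _ size_g)|/(factor_large _ size_h)]; lia.
Qed.

End NumberField.

Theorem lemma4 (r n b : nat) :
  (1 <= r)%N -> (0 < n)%N -> odd n -> (0 < b)%N -> propP n b ->
  forall i : nat, (i <= r)%N ->
    irreducible_Z ('X^(2 ^ i * n) + ((b ^ (2 ^ r))%N%:Z)%:P).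
Proof.
move=> _ n_gt0 odd_n b_gt0 propP_b i i_le_r.
set N := (2 ^ i * n)%N; set a := (b ^ 2 ^ r)%N.
have N_gt0 : (0 < N)%N by rewrite muln_gt0 expn_gt0 n_gt0.
have size_XnaddC (R : nzRingType) (c : R) : size ('X^N + c%:P) = N.+1.
  by rewrite size_polyDl ?size_polyXn // ltnS (leq_trans (size_polyC_leq1 c)).
have [Qs [QsC [[|x []] // [Dx] _]]] := num_field_exists [:: N.-root (- a%:R)].
have x_root : x ^+ N = - a%:R.
  by apply: (fmorph_inj QsC); rewrite rmorphXn Dx rootCK // rmorphN rmorph_nat.
have d_le_N : (adjoin_degree 1%VS x <= N)%N.
  have XnaddC_neq0 := monic_neq0 (monicXnaddC (a%:R : Qs) N_gt0).
  by have := dvdp_leq XnaddC_neq0 (minPoly_dvd_XnaddC x_root); rewrite size_minPoly size_XnaddC.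
have pow2_dvd : (2 ^ i %| adjoin_degree 1%VS x)%N.
  apply: (pow2_dvd_adjoin_degree QsC (n := n) (t := b ^ 2 ^ (r - i))).
    by rewrite expn_gt0 b_gt0.
  by rewrite x_root -expnM -expnD subnK.
have n_dvd : (n %| adjoin_degree 1%VS x)%N.
  have [w Ew] := minPoly_const_pow QsC N_gt0 x_root.
  exact: propP_pow_dvd odd_n propP_b Ew.
have deg_x : adjoin_degree 1%VS x = N.
  apply/eqP; rewrite eqn_leq d_le_N dvdn_leq ?adjoin_deg_gt0 //.
  by rewrite /N Gauss_dvd ?pow2_dvd ?n_dvd // coprimeXl // coprime2n.
apply: (irreducible_Z_of_root_degree (x := x)); rewrite ?size_XnaddC ?ltnS //.
by rewrite rmorphD /= map_polyXn map_polyC /= -pmulrn rootE hornerD hornerXn hornerC x_root addNr.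
Qed.
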